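(* Let $i\in I$ and let $\xi\in\mathscr C$ satisfy $D_i^\#(\xi)=\xi$. Then $\xi$ is a $\mathbb C$-linear combination of elements of the form $f\otimes t_\beta+s_i(f)\otimes t_{s_i\beta}$ with $f\in\mathbb C(P)$, $\beta\in Q^\vee$.
   Context: $G$ is a simply connected simple algebraic group over $\mathbb C$ with maximal torus $H$, Weyl group $W$, weight lattice $P$, simple roots $\alpha_i$ and simple reflections $s_i$ ($i\in I$), coroot lattice $Q^\vee$ (on which $W$ acts). $\mathbb C(P)$ is the fraction field of the group algebra $\mathbb CP$ (basis $e^\lambda$), with $W$ acting by $w(e^\lambda)=e^{w\lambda}$. $\mathscr C=\mathbb C(P)\otimes\mathbb CQ^\vee$, with basis symbols $t_\beta$ ($\beta\in Q^\vee$), is the commutative algebra with $(f\otimes t_\beta)(g\otimes t_\gamma)=fg\otimes t_{\beta+\gamma}$. For $i\in I$, $D_i^\#$ is the $\mathbb C$-linear operator on $\mathscr C$ given by $$D_i^\#(f\otimes t_\beta)=\frac{f}{1-e^{\alpha_i}}\otimes t_\beta-\frac{e^{\alpha_i}s_i(f)}{1-e^{\alpha_i}}\otimes t_{s_i\beta}.$$ *)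

From HB Require Import structures.
From mathcomp Require Import all_boot all_order all_algebra.
From mathcomp Require Import mpoly complex reals.
Set Implicit Arguments.
Unset Strict Implicit.
Unset Printing Implicit Defensive.
Import Order.TTheory GRing.Theory Num.Theory.
Local Open Scope ring_scope.

(* Root datum of a simply connected simple group G over C, encoded by its    *)
(* Cartan matrix A (A i j = <alpha_i^vee, alpha_j>), I = 'I_n.               *)
(* Simply connected simple groups over C  <->  indecomposable Cartan         *)
(* matrices of finite type (classification).                                 *)

Definition finite_type_cartan (n : nat) (A : 'M[int]_n) : Prop :=
  [/\ (0 < n)%N,
      [/\ (forall i, A i i = 2),
           (forall i j, i != j -> A i j <= 0) &
           (forall i j, A i j = 0 <-> A j i = 0)],
      (exists d : 'I_n -> rat,
         [/\ (forall i, 0 < d i),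
             (forall i j, d i * (A i j)%:~R = d j * (A j i)%:~R) &
             (forall v : 'I_n -> rat, (exists i, v i != 0) ->
                0 < \sum_i \sum_j v i * d i * (A i j)%:~R * v j)])
    & (* indecomposable (G simple) *)
      (forall J : {set 'I_n}, J != set0 -> J != setT ->
         exists i j, [/\ i \in J, j \notin J & A i j != 0])].

(* Weight lattice P: coordinates w.r.t. the fundamental weights varpi_k.     *)
Definition weight (n : nat) := 'rV[int]_n.
(* Coroot lattice Q^vee: coordinates w.r.t. the simple coroots alpha_k^vee.  *)
Definition coweight (n : nat) := 'rV[int]_n.

Section RootDatum.
Variables (n : nat) (A : 'M[int]_n).

(* simple root alpha_i in P : <alpha_k^vee, alpha_i> = A k i *)
Definition sroot (i : 'I_n) : weight n := \row_k A k i.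
Definition scoroot (i : 'I_n) : coweight n := \row_k (k == i)%:R.
(* s_i on P : s_i(lambda) = lambda - <alpha_i^vee, lambda> alpha_i *)
Definition sP (i : 'I_n) (l : weight n) : weight n := l - l 0 i *: sroot i.
Definition pairQ (b : coweight n) (i : 'I_n) : int := \sum_k b 0 k * A k i.
Definition sQ (i : 'I_n) (b : coweight n) : coweight n :=
  b - pairQ b i *: scoroot i.
End RootDatum.

Section Algebra.
Variables (R : realType).
Definition CC := R[i].
(* C(P): fraction field of CP = C[x_k^{+-1}], x_k = e^{varpi_k};          *)
(* equivalently the field of rational functions C(x_1,...,x_n).           *)
Definition CP (n : nat) := {fraction {mpoly CC[n]}}.

Variable n : nat.

Definition cst (c : CC) : CP n := tofrac (c%:MP).
Definition xvar (k : 'I_n) : CP n := tofrac ('X_k).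
Definition ee (l : weight n) : CP n := \prod_k xvar k ^ (l 0 k).

Variable A : 'M[int]_n.

(* s_i acting on C(P): the field automorphism with s_i(c) = c for c in C  *)
(* and s_i(e^lambda) = e^{s_i lambda}; on polynomials it is the          *)
(* substitution x_k |-> e^{s_i varpi_k}, extended to fractions.          *)
Definition sig_poly (i : 'I_n) (p : {mpoly CC[n]}) : CP n :=
  mmap (fun c => cst c) (fun k => ee (sP A i (delta_mx 0 k))) p.
Definition sigC (i : 'I_n) (f : CP n) : CP n :=
  sig_poly i (\n_(repr f)) / sig_poly i (\d_(repr f)).

(* The algebra scrC = C(P) (x) CQ^vee: its elements are the finitely      *)
(* supported functions Q^vee -> C(P), xi = sum_beta xi(beta) (x) t_beta.  *)
Definition scrC := coweight n -> CP n.
Definition fin_supp (xi : scrC) : Prop :=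
  exists s : seq (coweight n), forall b, xi b != 0 -> b \in s.
Definition tens (f : CP n) (b : coweight n) : scrC :=
  fun g => if g == b then f else 0.

(* D_i^#, the C-linear extension of                                       *)
(*  f (x) t_b |-> f/(1-e^{a_i}) (x) t_b - e^{a_i} s_i(f)/(1-e^{a_i}) (x) t_{s_i b}. *)
(* Coefficient of t_g in D_i^#(xi): the unique b with s_i b = g is s_i g. *)
Definition Dsharp (i : 'I_n) (xi : scrC) : scrC :=
  fun g => xi g / (1 - ee (sroot A i))
           - ee (sroot A i) * sigC i (xi (sQ A i g)) / (1 - ee (sroot A i)).

Definition sym_elt (i : 'I_n) (f : CP n) (b : coweight n) : scrC :=
  fun g => tens f b g + tens (sigC i f) (sQ A i b) g.
End Algebra.

(** If [D_i^#] fixes [xi], clearing the denominator [1 - e^{alpha_i}] in the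
    coefficient of [t_g] leaves [e^{alpha_i} (s_i(xi(s_i g)) - xi g) = 0], so
    [s_i(xi b) = xi(s_i b)] for every [b].  Since [s_i] is an involution of
    [Q^vee], [xi] is then the average over its (finite, [s_i]-saturated)
    support of the symmetric elements [xi(b) (x) t_b + s_i(xi b) (x) t_{s_i b}]. *)
From HB Require Import structures.
From mathcomp Require Import all_boot all_order all_algebra.
From mathcomp Require Import mpoly complex reals.
From mathcomp Require Import ring.
Import GRing.Theory Num.Theory.
Local Open Scope ring_scope.

Section CorootReflection.
Context {n : nat} {A : 'M[int]_n} {i : 'I_n}.

Lemma pairQD (b c : coweight n) : pairQ A (b + c) i = pairQ A b i + pairQ A c i.
Proof.
by rewrite /pairQ -big_split; apply: eq_bigr => k _; rewrite !mxE mulrDl.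
Qed.

Lemma pairQZ (z : int) (b : coweight n) : pairQ A (z *: b) i = z * pairQ A b i.
Proof.
by rewrite /pairQ mulr_sumr; apply: eq_bigr => k _; rewrite !mxE mulrA.
Qed.

Lemma pairQN (b : coweight n) : pairQ A (- b) i = - pairQ A b i.
Proof. by rewrite -scaleN1r pairQZ mulN1r. Qed.

Lemma pairQ_scoroot : pairQ A (scoroot i) i = A i i.
Proof.
rewrite /pairQ (bigD1 i) //= big1 ?addr0; first by rewrite mxE eqxx mul1r.
by move=> k /negbTE hk; rewrite mxE hk mul0r.
Qed.

Hypothesis Aii : A i i = 2.

Lemma sQK : involutive (sQ A i).
Proof.
move=> b; rewrite {1}/sQ pairQD pairQN pairQZ pairQ_scoroot Aii.
have -> : pairQ A b i - pairQ A b i * 2 = - pairQ A b i by ring.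
by rewrite /sQ scaleNr opprK addrNK.
Qed.

End CorootReflection.

Section FixedPoints.
Context {R : realType} {n : nat} {A : 'M[int]_n} {i : 'I_n}.
Implicit Types xi : scrC R n.

Lemma xvar_neq0 (k : 'I_n) : xvar R k != 0.
Proof.
rewrite /xvar tofrac_eq0; apply/eqP => X0.
by have := mcoeffXU (CC R) k k; rewrite X0 mcoeff0 eqxx => /esym/eqP; rewrite oner_eq0.
Qed.

Lemma ee_neq0 (l : weight n) : ee R l != 0.
Proof. by apply/prodf_neq0 => k _; apply: expfz_neq0; apply: xvar_neq0. Qed.

Lemma cst_half_add : cst n (2^-1 : CC R) + cst n 2^-1 = 1.
Proof. by rewrite /cst -!rmorphD /= -[2^-1]mul1r -splitr !rmorph1. Qed.

Let a := ee R (sroot A i).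

(* [1 - e^{alpha_i}] is never [0]; rather than proving this we use that
   division by [0] returns [0], which forces [xi = 0]. *)
Lemma Dsharp_eq_id_degenerate xi : 1 - a = 0 -> Dsharp A i xi = xi -> forall g, xi g = 0.
Proof. by move=> a1 <- g; rewrite /Dsharp -/a a1 invr0 !mulr0 subrr. Qed.

Lemma Dsharp_eq_id_sigC xi : 1 - a != 0 -> Dsharp A i xi = xi ->
  forall g, sigC A i (xi (sQ A i g)) = xi g.
Proof.
move=> a1 hD g; set y := sigC A i _.
have := congr1 (fun eta => eta g * (1 - a)) hD.
rewrite /= /Dsharp -/a -/y mulrBl !mulfVK // => e.
have : a * (y - xi g) = xi g * (1 - a) - (xi g - a * y) by ring.
rewrite -e subrr => /eqP.
by rewrite mulf_eq0 (negbTE (ee_neq0 _)) subr_eq0 => /eqP.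
Qed.

Lemma big_tens_diag (S : seq (coweight n)) (F : coweight n -> CP R n) g :
  uniq S -> (F g != 0 -> g \in S) -> \sum_(c <- S) tens (F c) c g = F g.
Proof.
move=> uS suppS; have [Fg0|/suppS gS] := eqVneq (F g) 0.
  by rewrite Fg0 big1 // => c _; rewrite /tens; case: eqP => // <-.
rewrite (bigD1_seq g) //= /tens eqxx big1 ?addr0 // => c.
by rewrite eq_sym => /negbTE ->.
Qed.

Hypothesis Aii : A i i = 2.

(* The factor [1/2] absorbs the double count of [b] and [s_i b] in [S]. *)
Lemma sym_elt_decomposition xi (s : seq (coweight n)) :
  (forall b, xi b != 0 -> b \in s) ->
  (forall b, sigC A i (xi b) = xi (sQ A i b)) ->
  exists l : seq (CC R * CP R n * coweight n),
    forall g, xi g = \sum_(x <- l) cst n x.1.1 * sym_elt A i x.1.2 x.2 g.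
Proof.
move=> supp_s sigC_xi.
pose S := undup (s ++ map (sQ A i) s).
have uS : uniq S := undup_uniq _.
have suppS b : xi b != 0 -> b \in S.
  by move/supp_s => bs; rewrite mem_undup mem_cat bs.
have suppSQ b : xi b != 0 -> b \in map (sQ A i) S.
  move/supp_s => bs; rewrite -[b](sQK Aii) mem_map; last exact: can_inj (sQK Aii).
  by rewrite mem_undup mem_cat map_f ?orbT.
exists [seq (2^-1, xi b, b) | b <- S] => g.
rewrite big_map /=.
under eq_bigr do rewrite /sym_elt sigC_xi mulrDr.
rewrite big_split /= -!mulr_sumr big_tens_diag //; last exact: suppS.
rewrite -(big_map _ xpredT (fun c => tens (xi c) c g)) big_tens_diag.
- by rewrite -mulrDl cst_half_add mul1r.
- by rewrite map_inj_uniq //; apply: can_inj (sQK Aii).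
- exact: suppSQ.
Qed.

End FixedPoints.

Theorem corollary2p4 (R : realType) (n : nat) (A : 'M[int]_n)
    (hA : finite_type_cartan A) (i : 'I_n) (xi : scrC R n) :
  fin_supp xi ->
  Dsharp A i xi = xi ->
  exists l : seq (CC R * CP R n * coweight n),
    forall g, xi g = \sum_(x <- l) cst n x.1.1 * sym_elt A i x.1.2 x.2 g.
Proof.
move=> [s supp_s] hD.
have Aii : A i i = 2 by case: hA => _ [].
have [a1|a1] := eqVneq (1 - ee R (sroot A i)) 0.
  by exists [::] => g; rewrite big_nil (Dsharp_eq_id_degenerate xi a1 hD).
apply: (sym_elt_decomposition Aii xi s supp_s) => b.
by rewrite -{1}(sQK Aii b) (Dsharp_eq_id_sigC xi a1 hD).
Qed.
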